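(* For $n\geqslant1$, $m,f\geqslant0$ let $\mathfrak{l}_{n,m,f}$ be the number of inversion sequences $\sigma$ of length $n$ avoiding both $010$ and $110$, with maximum value $m$ and $\mathrm{forb}(\sigma,\{010,110\})=f$. Then for all $n\geqslant1$, $m\geqslant1$, $f\geqslant0$, $$\mathfrak{l}_{n,m,f}=\sum_{p=m+1}^{n}\sum_{i=0}^{f-1}\sum_{j=0}^{m-1}\mathfrak{l}_{p-1,j,i}\cdot\Bigl(\mathfrak{j}_{n-p,\,m-i,\,f-i-1}+\delta_{f,m+1}\sum_{\ell=0}^{n-p-1}\mathfrak{k}_{\ell,\,m-i}\Bigr),$$ where $\mathfrak{j}_{a,b,c}$ is the number of words of length $a$ over $\{0,\dots,b-1\}$ avoiding $010$ and $110$ with $\mathrm{forb}=c$ (the empty word having $\mathrm{forb}=0$), and $\mathfrak{k}_{a,b}$ is the number of words of length $a$ over $\{0,\dots,b-1\}$ avoiding $010$ and $110$.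
   Context: $\delta_{a,b}$ is the Kronecker delta. An inversion sequence of length $n$ is a sequence $(\sigma_1,\dots,\sigma_n)$ of integers with $0\leqslant\sigma_i<i$. A sequence contains a pattern $p$ if some subsequence is order-isomorphic to $p$; otherwise it avoids $p$. Avoiding $010$: no $i<j<l$ with $\sigma_i=\sigma_l<\sigma_j$. Avoiding $110$: no $i<j<l$ with $\sigma_i=\sigma_j>\sigma_l$. For a nonempty sequence $\sigma$ avoiding a set of patterns $P$, a value $v\in\{0,\dots,\max(\sigma)\}$ is forbidden if $\sigma$ followed by $M$ and then $v$ contains some pattern of $P$, where $M>\max(\sigma)$; $\mathrm{forb}(\sigma,P)$ is the number of forbidden values. *)

From mathcomp Require Import all_boot.
Set Implicit Arguments. Unset Strict Implicit. Unset Printing Implicit Defensive.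

(* Sequences are seq nat, 0-indexed: s`_i = nth 0 s i. *)

(* Inversion sequence: (sigma_1..sigma_n) with 0 <= sigma_i < i (1-indexed). *)
Definition inversion_seq (s : seq nat) : bool :=
  [forall i : 'I_(size s), nth 0 s i < i.+1].

Definition contains010 (s : seq nat) : bool :=
  [exists i : 'I_(size s), exists j : 'I_(size s), exists l : 'I_(size s),
    [&& i < j, j < l, nth 0 s i == nth 0 s l & nth 0 s l < nth 0 s j]].

Definition contains110 (s : seq nat) : bool :=
  [exists i : 'I_(size s), exists j : 'I_(size s), exists l : 'I_(size s),
    [&& i < j, j < l, nth 0 s i == nth 0 s j & nth 0 s l < nth 0 s j]].

Definition avoids (s : seq nat) : bool := ~~ contains010 s && ~~ contains110 s.

Definition maxval (s : seq nat) : nat := \max_(x <- s) x.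

Definition forb (s : seq nat) : nat :=
  count (fun v => ~~ avoids (s ++ [:: (maxval s).+1; v])) (iota 0 (maxval s).+1).

(* l_{n,m,f}: inversion sequences of length n (entries are < n, so they are
   the n-tuples over 'I_n satisfying inversion_seq). *)
Definition lcount (n m f : nat) : nat :=
  #|[set t : n.-tuple 'I_n |
      let s := map val t in
      [&& inversion_seq s, avoids s, maxval s == m & forb s == f]]|.

Definition jcount (a b c : nat) : nat :=
  #|[set t : a.-tuple 'I_b | let s := map val t in avoids s && (forb s == c)]|.

Definition kcount (a b : nat) : nat :=
  #|[set t : a.-tuple 'I_b | avoids (map val t)]|.

Definition kdelta (a b : nat) : nat := (a == b : nat).

From mathcomp Require Import all_boot zify.
Set Implicit Arguments. Unset Strict Implicit. Unset Printing Implicit Defensive.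

(* Let s be counted by l_{n,m,f} and let p be the position of the first occurrence of its
   maximum m.  As s is an inversion sequence, p >= m + 1, and s = a ++ m :: t where a is an
   inversion sequence of length p - 1 avoiding 010 and 110, with maximum j < m and forb a = i.
   Then s avoids 010 and 110 iff a and m :: t do and t only uses values not forbidden by a.
   There are m - i such values below m; relabelling them and m increasingly onto
   {0, ..., m - i} turns m :: t into (m - i) :: v with v a word over {0, ..., m - i}.
   If m - i does not occur in v, then v is a word over {0, ..., m - i - 1} and
   forb s = i + forb v + 1: this gives the j-term.  Otherwise forb s = m + 1, since a repeated
   maximum forbids every smaller value, and (m - i) :: v avoids 010 and 110 iff
   v = u ++ nseq k (m - i) with u an avoiding word over {0, ..., m - i - 1}: this gives the
   sum of the k-terms. *)

Fixpoint words (L c : nat) : seq (seq nat) :=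
  if L is L'.+1 then [seq x :: u | x <- iota 0 c, u <- words L' c] else [:: [::]].

Lemma mem_words L c s : (s \in words L c) = (size s == L) && all (fun x => x < c) s.
Proof.
elim: L s => [|L IH] [|x s] //=.
- by apply/allpairsPdep; case=> [y [t [_ _ //]]].
- apply/idP/idP.
  + case/allpairsPdep=> y [t [hy ht [-> ->]]]; move: ht; rewrite IH => /andP[/eqP -> ->].
    by move: hy; rewrite mem_iota /= !andbT eqxx.
  + case/andP=> hs /andP[hx ha]; apply/allpairsPdep; exists x, s; split=> //.
    by rewrite mem_iota. by rewrite IH -(eqn_add2r 1) !addn1 hs ha.
Qed.

Lemma uniq_words L c : uniq (words L c).
Proof.
elim: L => [|L IH] //=.
apply: allpairs_uniq => //; first exact: iota_uniq.
by move=> [a u] [b v] _ _ /= [-> ->].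
Qed.

Lemma count_sumE (T : Type) (P : pred T) (s : seq T) : count P s = \sum_(x <- s) P x.
Proof. by rewrite -sum1_count big_mkcond. Qed.

Lemma card_tuple_words L c (P : pred (seq nat)) :
  #|[set t : L.-tuple 'I_c | P (map val t)]| = count P (words L c).
Proof.
rewrite -sum1_card big_mkcond /= count_sumE.
rewrite (eq_bigr (fun t : L.-tuple 'I_c => (P (map val t) : nat))); last first.
  by move=> t _; rewrite in_set; case: (P _).
rewrite -(big_map (fun t : L.-tuple 'I_c => map val t) xpredT (fun s => (P s : nat))).
apply: perm_big; apply: uniq_perm; last first.
- move=> s; rewrite mem_words; apply/mapP/idP.
  + case=> t _ ->; rewrite size_map size_tuple eqxx /=.
    by apply/allP=> x /mapP[y _ ->].
  + case/andP=> /eqP hs hc.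
    have es : map val (pmap insub s : seq 'I_c) = s.
      by rewrite (pmap_filter (insubK _)) (eq_filter (isSome_insub _)); apply/all_filterP.
    have ht : size (pmap insub s : seq 'I_c) == L by rewrite -(size_map val) es hs.
    by exists (Tuple ht); rewrite ?mem_index_enum.
- exact: uniq_words.
- rewrite map_inj_uniq ?index_enum_uniq //.
  by move=> t1 t2 /= /(inj_map val_inj) /val_inj.
Qed.

Lemma big_words_cons L c (F : seq nat -> nat) :
  \sum_(u <- words L.+1 c) F u = \sum_(x <- iota 0 c) \sum_(u <- words L c) F (x :: u).
Proof. by rewrite /= big_allpairs_dep. Qed.

Lemma big_words_cat L l c (F : seq nat -> nat) : l <= L ->
  \sum_(u <- words L c) F u = \sum_(a <- words l c) \sum_(t <- words (L - l) c) F (a ++ t).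
Proof.
elim: l L F => [|l IH] L F hl; first by rewrite /= big_seq1 subn0.
case: L hl => [//|L] hl.
by rewrite !big_words_cons subSS; apply: eq_bigr => x _; exact: IH.
Qed.

Lemma big_words_shrink L c d (F : seq nat -> nat) : d <= c ->
  (forall u, size u = L -> all (fun x => x < c) u -> 0 < F u -> all (fun x => x < d) u) ->
  \sum_(u <- words L c) F u = \sum_(u <- words L d) F u.
Proof.
move=> hdc hF.
rewrite (bigID (fun u => all (fun x => x < d) u)) /=.
rewrite [X in _ + X]big1_seq ?addn0; last first.
  move=> u /andP[hn]; rewrite mem_words => /andP[/eqP hs hu].
  by case: (F u =P 0) => // /eqP; rewrite -lt0n => /(hF u hs hu); rewrite (negbTE hn).
rewrite -big_filter; apply: perm_big; apply: uniq_perm.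
- exact/filter_uniq/uniq_words.
- exact: uniq_words.
move=> u; rewrite mem_filter !mem_words; case hd: (all _ u); rewrite ?andbF //=.
congr (_ && _); apply/allP=> x hx; apply: leq_trans hdc; exact: (allP hd).
Qed.

Lemma big_words_relabel L c (A : seq nat) (F : seq nat -> nat) :
  uniq A -> all (fun x => x < c) A ->
  \sum_(u <- words L c) (all (fun x => x \in A) u) * F u =
  \sum_(v <- words L (size A)) F (map (nth 0 A) v).
Proof.
move=> uA cA; elim: L F => [|L IH] F; first by rewrite /= !big_seq1 mul1n.
rewrite !big_words_cons /=.
rewrite (eq_bigr (fun x => (x \in A) * \sum_(v <- words L (size A)) F (x :: map (nth 0 A) v)));
  last first.
  move=> x _; rewrite -(IH (fun u => F (x :: u))) big_distrr /=; apply: eq_bigr => u _ /=.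
  by rewrite mulnA -mulnb.
rewrite (eq_bigr (fun x => if x \in A then \sum_(v <- words L (size A)) F (x :: map (nth 0 A) v)
                          else 0)); last by move=> x _; rewrite mulnbl.
rewrite -big_mkcond -big_filter (perm_big A); last first.
  apply: uniq_perm; [exact/filter_uniq/iota_uniq | exact: uA |].
  move=> x; rewrite mem_filter mem_iota /=; case hx: (x \in A) => //=.
  exact: (allP cA).
by rewrite [LHS](big_nth 0) /index_iota subn0.
Qed.

Lemma big_nat_pred1 a c x (F : nat -> nat) :
  \sum_(a <= k < c) (x == k) * F k = (a <= x < c) * F x.
Proof.
rewrite (eq_bigr (fun k => (k == x) * F x)); last by move=> k _; rewrite eq_sym; case: eqP => [->|].
by rewrite -big_distrl /= -count_sumE count_uniq_mem ?iota_uniq // mem_index_iota.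
Qed.

Lemma sum_nat_pred1 a c x : \sum_(a <= k < c) (x == k) = (a <= x < c).
Proof. by rewrite -[RHS]muln1 -big_nat_pred1; apply: eq_bigr => k _; rewrite muln1. Qed.

Lemma big_words_first L c x (F : seq nat -> nat) : x < c ->
  \sum_(s <- words L c) (x \in s) * F s =
  \sum_(0 <= k < L) \sum_(a <- words k c) \sum_(t <- words (L - k.+1) c)
     (x \notin a) * F (a ++ x :: t).
Proof.
move=> xc.
rewrite (eq_big_seq (fun s => \sum_(0 <= k < L) (index x s == k) * F s)); last first.
  move=> s; rewrite mem_words => /andP[/eqP <- _].
  by rewrite -big_distrl /= sum_nat_pred1 /= index_mem.
rewrite exchange_big; apply: eq_big_nat => k /andP[_ kL].
rewrite (big_words_cat _ _ (ltnW kL)) -(subnSK kL).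
apply: eq_big_seq => a; rewrite mem_words => /andP[/eqP ak _].
rewrite big_words_cons.
rewrite (eq_bigr (fun y => (x == y) *
                            \sum_(t <- words (L - k.+1) c) (x \notin a) * F (a ++ x :: t)));
  last first.
  move=> y _; rewrite big_distrr; apply: eq_bigr => t _ /=.
  rewrite index_cat ak; case: (boolP (x \in a)) => xa /=.
    by rewrite ltn_eqF ?muln0 // -ak index_mem.
  case: (eqVneq x y) => [<-|xy]; first by rewrite addn0 eqxx !mul1n.
  by rewrite -[X in _ == X]addn0 eqn_add2l.
have -> : iota 0 c = index_iota 0 c by rewrite /index_iota subn0.
by rewrite -big_distrl /= sum_nat_pred1 xc mul1n.
Qed.

Fixpoint has2 (p q : pred nat) (s : seq nat) : bool :=
  if s is x :: s' then (p x && has q s') || has2 p q s' else false.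

Lemma has2P (p q : pred nat) s :
  reflect (exists j l, [/\ j < l, l < size s, p (nth 0 s j) & q (nth 0 s l)]) (has2 p q s).
Proof.
elim: s => [|x s IH] /=; first by apply: (iffP idP) => // [[j [l [_ hl _ _]]]].
apply: (iffP orP).
- case.
  + case/andP=> px /hasP [y ys qy]; exists 0, (index y s).+1; split=> //.
    by rewrite ltnS index_mem. by rewrite /= nth_index.
  + by case/IH=> j [l [hjl hl pj ql]]; exists j.+1, l.+1.
- case=> [[|j] [[|l] [hjl hl pj ql]]] //.
  + by left; rewrite pj /=; apply/hasP; exists (nth 0 s l); first exact: mem_nth.
  + by right; apply/IH; exists j, l.
Qed.

Lemma has2_has p q s : has2 p q s -> has p s && has q s.
Proof.
elim: s => [|x s IH] //= /orP [/andP [-> ->] | /IH /andP [-> ->]] //; by rewrite ?orbT.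
Qed.

Lemma has2_cat p q s t :
  has2 p q (s ++ t) = [|| has2 p q s, has p s && has q t | has2 p q t].
Proof.
elim: s => [|x s IH] //=; rewrite IH has_cat.
by case: (p x); case: (has q s); case: (has2 p q s); case: (has p s); case: (has q t);
  case: (has2 p q t).
Qed.

Definition has3 (P Q : nat -> nat -> bool) (s : seq nat) : bool :=
  [exists i : 'I_(size s), exists j : 'I_(size s), exists l : 'I_(size s),
     [&& i < j, j < l, P (nth 0 s i) (nth 0 s j) & Q (nth 0 s i) (nth 0 s l)]].

Lemma has3_cons P Q x s : has3 P Q (x :: s) = has2 (P x) (Q x) s || has3 P Q s.
Proof.
apply/existsP/orP.
- case=> -[[|i] hi] /existsP [[[|j] hj] /existsP [[[|l] hl] /and4P [//= hij hjl hP hQ]]].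
  + by left; apply/has2P; exists j, l.
  + right; apply/existsP; exists (Ordinal (hi : i < size s)).
    apply/existsP; exists (Ordinal (hj : j < size s)).
    by apply/existsP; exists (Ordinal (hl : l < size s)); apply/and4P.
- case.
  + case/has2P=> j [l [hjl hl hP hQ]].
    exists ord0; apply/existsP; exists (Ordinal (ltn_trans hjl hl : j.+1 < (size s).+1)).
    by apply/existsP; exists (Ordinal (hl : l.+1 < (size s).+1)); apply/and4P.
  + case/existsP=> i /existsP [j /existsP [l /and4P [hij hjl hP hQ]]].
    exists (lift ord0 i); apply/existsP; exists (lift ord0 j); apply/existsP; exists (lift ord0 l).
    by apply/and4P.
Qed.

Lemma contains010E s : contains010 s = has3 (fun a b => a < b) (fun a c => c == a) s.
Proof.
apply: eq_existsb => i; apply: eq_existsb => j; apply: eq_existsb => l.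
by rewrite eq_sym; case: eqP => [->|_]; rewrite ?eqxx ?andbT ?andbF.
Qed.

Lemma contains110E s : contains110 s = has3 (fun a b => b == a) (fun a c => c < a) s.
Proof.
apply: eq_existsb => i; apply: eq_existsb => j; apply: eq_existsb => l.
by rewrite eq_sym; case: eqP => [->|_].
Qed.

Lemma avoids_nil : avoids [::].
Proof. by apply/andP; split; apply/existsP => -[[]]. Qed.

Lemma avoids_cons x s : avoids (x :: s) =
  [&& ~~ has2 (fun y => x < y) (pred1 x) s, ~~ has2 (pred1 x) (fun y => y < x) s & avoids s].
Proof.
rewrite /avoids contains010E contains110E !has3_cons -contains010E -contains110E.
by case: (has2 _ _ s); case: (has2 _ _ s); case: (contains010 s); case: (contains110 s).
Qed.

Fixpoint avoids_across (s t : seq nat) : bool :=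
  if s is x :: s' then
    [&& avoids_across s' t, ~~ (has (fun y => x < y) s' && (x \in t)),
        ~~ has2 (fun y => x < y) (pred1 x) t, ~~ ((x \in s') && has (fun y => y < x) t)
      & ~~ has2 (pred1 x) (fun y => y < x) t]
  else true.

Lemma avoids_cat s t : avoids (s ++ t) = [&& avoids s, avoids t & avoids_across s t].
Proof.
elim: s => [|x s IH]; first by rewrite /= avoids_nil andbT.
rewrite cat_cons !avoids_cons !has2_cat IH !has_pred1 /=.
by case: (has2 _ _ s); case: (has2 _ _ s); case: (has _ s); case: (x \in s); case: (x \in t);
  case: (has2 _ _ t); case: (has2 _ _ t); case: (has _ t); case: (avoids s); case: (avoids t);
  case: (avoids_across s t).
Qed.

Lemma leq_maxval s x : x \in s -> x <= maxval s.
Proof. by move=> xs; apply: (leq_bigmax_seq x) xs _. Qed.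

Lemma maxval_mem s : s != [::] -> maxval s \in s.
Proof.
elim: s => [|x s IH] // _; rewrite /maxval big_cons -/(maxval s) in_cons.
case: (leqP x (maxval s)) => h; last by rewrite eqxx.
case: s IH h => [|y s] IH h; last by rewrite IH ?orbT.
by move: h; rewrite /maxval big_nil leqn0 => /eqP ->.
Qed.

(* The values v for which s ++ [:: M; v] contains 010 (v occurs in s) or 110 (some y > v
   occurs twice in s); see avoids_snoc_top. *)
Definition forbidden (s : seq nat) (v : nat) : bool :=
  (v \in s) || has (fun y => (v < y) && (1 < count_mem y s)) s.

Lemma forbidden_cons x s v :
  forbidden (x :: s) v = [|| v == x, forbidden s v | (v < x) && (x \in s)].
Proof.
rewrite /forbidden in_cons /= eqxx add1n ltnS -has_count has_pred1.
apply/idP/idP.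
- case/orP=> [/orP [->|->] //|/orP [->|]]; rewrite ?orbT //.
  case/hasP=> y ys /andP [vy]; case: eqP => [exy|_]; rewrite ?add1n ?add0n ?ltnS.
    by rewrite -has_count has_pred1 => _; rewrite exy vy ys !orbT.
  move=> cy; apply/orP; right; apply/orP; left; apply/orP; right.
  by apply/hasP; exists y; rewrite ?vy.
- case/or3P=> [->|/orP [->|]|/andP[vx xs]]; rewrite ?orbT //.
  + case/hasP=> y ys /andP [vy cy]; rewrite orbA; apply/orP; right; apply/hasP; exists y => //.
    by rewrite vy /=; case: (x == y) => //; exact: ltnW.
  + by rewrite vx xs !orbT.
Qed.

Lemma forbidden_le_maxval s v : forbidden s v -> v <= maxval s.
Proof.
case/orP=> [/leq_maxval //|/hasP [y ys /andP [vy _]]].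
by apply: ltnW; apply: leq_trans vy _; exact: leq_maxval.
Qed.

Lemma forbidden_ltF s b : all (fun x => x < b) s -> forbidden s b = false.
Proof.
move=> hs; apply/negbTE/negP; case/orP; first by move/(allP hs); rewrite ltnn.
by case/hasP => y /(allP hs) yb /andP [hby _]; move: (ltn_trans hby yb); rewrite ltnn.
Qed.

Lemma avoids_across_top (a t : seq nat) m : all (fun y => y < m) a ->
  avoids_across a (m :: t) = all (fun v => ~~ forbidden a v) t.
Proof.
elim: a => [|x a IH] /=; first by elim: t => // y t /= ->.
case/andP=> xm am; rewrite IH //.
rewrite (eq_all (a1 := fun v => ~~ forbidden (x :: a) v)
                (a2 := fun v => ~~ [|| v == x, forbidden a v | (v < x) && (x \in a)])); last first.
  by move=> v; rewrite forbidden_cons.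
case xt: (x \in t).
- rewrite xm has_pred1 xt /= !andbF; symmetry; apply/negbTE/negP => /allP /(_ x xt).
  by rewrite eqxx.
- have h2 p : has2 p (pred1 x) t = false.
    by apply/negbTE/negP => /has2_has /andP [_]; rewrite has_pred1 xt.
  have h3 q : has2 (pred1 x) q t = false.
    by apply/negbTE/negP => /has2_has /andP [+ _]; rewrite has_pred1 xt.
  have mx : (m < x) = false by rewrite ltnNge ltnW.
  rewrite h2 h3 in_cons xt has_pred1 xt (ltn_eqF xm) (gtn_eqF xm) mx /= ?andbF ?andbT ?orbF.
  rewrite (eq_in_all (a1 := fun v => ~~ [|| v == x, forbidden a v | (v < x) && (x \in a)])
                     (a2 := predI (fun v => ~~ forbidden a v)
                                  (fun v => ~~ ((v < x) && (x \in a)))));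
    last first.
    move=> v vt /=; have -> : (v == x) = false.
      by apply/negbTE/negP => /eqP ev; rewrite -ev vt in xt.
    by rewrite /= negb_or.
  rewrite all_predI; congr (_ && _).
  case: (x \in a); rewrite ?andbF ?andbT /=.
  + by rewrite -all_predC; apply: eq_all => v; rewrite andbT.
  + by clear IH; elim: t {xt h2 h3} => // y t /= <-; rewrite andbF.
Qed.

Lemma avoids_snoc_top s M v : all (fun y => y < M) s ->
  avoids (s ++ [:: M; v]) = avoids s && ~~ forbidden s v.
Proof.
by move=> h; rewrite avoids_cat avoids_across_top // !avoids_cons avoids_nil /= !andbF /= !andbT.
Qed.

Lemma count_iota_supp (p : pred nat) N K : (forall y, p y -> y < N) -> N <= K ->
  count p (iota 0 K) = count p (iota 0 N).
Proof.
move=> hp hNK; rewrite -(subnKC hNK) iotaD count_cat add0n -[RHS]addn0; congr (_ + _).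
rewrite (@eq_in_count _ _ pred0) ?count_pred0 // => y; rewrite mem_iota => /andP [h _].
by apply/negbTE/negP => /hp; rewrite ltnNge h.
Qed.

Lemma forbE s : avoids s -> forb s = count (forbidden s) (iota 0 (maxval s).+1).
Proof.
move=> hs; rewrite /forb; apply: eq_count => v /=.
by rewrite avoids_snoc_top ?hs ?negbK //; apply/allP => y /leq_maxval.
Qed.

Lemma has2_map (p q : pred nat) g s :
  has2 p q (map g s) = has2 (fun y => p (g y)) (fun y => q (g y)) s.
Proof. by elim: s => [|x s IH] //=; rewrite IH has_map. Qed.

Lemma eq_in_has2 (p1 q1 p2 q2 : pred nat) s : {in s, p1 =1 p2} -> {in s, q1 =1 q2} ->
  has2 p1 q1 s = has2 p2 q2 s.
Proof.
elim: s => [|x s IH] //= hp hq.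
have sub_s y : y \in s -> y \in x :: s by rewrite in_cons => ->; rewrite orbT.
rewrite hp ?mem_head // IH; last 2 first.
- by move=> y ys; apply: hp (sub_s y ys).
- by move=> y ys; apply: hq (sub_s y ys).
by rewrite (eq_in_has (a2 := q2)) // => y ys; apply: hq (sub_s y ys).
Qed.

Section Relabel.

Variables (D : pred nat) (g : nat -> nat).
Hypothesis g_mono : {in D &, {mono g : x y / x < y}}.

Lemma relabel_eq x y : x \in D -> y \in D -> (g x == g y) = (x == y).
Proof.
by move=> hx hy; rewrite !eqn_leq (leqNgt (g x)) (leqNgt (g y)) (leqNgt x) (leqNgt y) !g_mono.
Qed.

Lemma avoids_relabel s : all (fun x => x \in D) s -> avoids (map g s) = avoids s.
Proof.
elim: s => [|x s IH] //= /andP [xD sD]; rewrite !avoids_cons IH // !has2_map.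
have sD' y : y \in s -> y \in D by move=> /(allP sD).
rewrite (@eq_in_has2 (fun y => g x < g y) (fun y => pred1 (g x) (g y))
                    (fun y => x < y) (pred1 x) s); last 2 first.
- by move=> y /sD' yD /=; rewrite g_mono.
- by move=> y /sD' yD /=; rewrite relabel_eq.
rewrite (@eq_in_has2 (fun y => pred1 (g x) (g y)) (fun y => g y < g x)
                    (pred1 x) (fun y => y < x) s) // => y /sD' yD /=.
- by rewrite relabel_eq.
- by rewrite g_mono.
Qed.

Lemma forbidden_relabel s k : all (fun x => x \in D) s -> k \in D ->
  forbidden (map g s) (g k) = forbidden s k.
Proof.
move=> sD kD; have sD' y : y \in s -> y \in D by move=> /(allP sD).
rewrite /forbidden -!has_pred1 !has_map; congr (_ || _).
- by apply: eq_in_has => y /sD' yD /=; rewrite relabel_eq.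
- apply: eq_in_has => y /sD' yD /=; rewrite g_mono //; congr (_ && (1 < _)).
  by rewrite count_map; apply: eq_in_count => z /sD' zD /=; rewrite relabel_eq.
Qed.

End Relabel.

Lemma inversion_seqP s : reflect (forall i, i < size s -> nth 0 s i <= i) (inversion_seq s).
Proof.
apply: (iffP forallP) => h.
- by move=> i hi; exact: (h (Ordinal hi)).
- by move=> i; rewrite ltnS; exact: h.
Qed.

Lemma inversion_seq_cat a m t : m <= size a -> all (fun y => y <= m) t ->
  inversion_seq (a ++ m :: t) = inversion_seq a.
Proof.
move=> ma tm; apply/inversion_seqP/inversion_seqP => h i hi.
- by have := h i; rewrite nth_cat hi; apply; rewrite size_cat; exact: ltn_addr.
- rewrite nth_cat; case: ltnP => hia; first exact: h.
  apply: leq_trans hia; case: (i - size a) => [|k] //=.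
  apply: leq_trans ma; case: (ltnP k (size t)) => hk; first exact: (allP tm) (mem_nth 0 hk).
  by rewrite nth_default.
Qed.

Lemma inversion_seq_bound s : inversion_seq s -> all (fun y => y < size s) s.
Proof.
move/inversion_seqP=> h; apply/allP => y ys.
by rewrite -(nth_index 0 ys); apply: leq_ltn_trans (h _ _) _; rewrite index_mem.
Qed.

Lemma big_words_notin L b (F : seq nat -> nat) :
  \sum_(u <- words L b.+1) (b \notin u) * F u = \sum_(u <- words L b) F u.
Proof.
rewrite (@big_words_shrink L b.+1 b) //; last first.
  move=> u _ hu; case: (boolP (b \in u)) => //= bu _; apply/allP => x xu.
  by rewrite ltn_neqAle -ltnS (allP hu x xu) andbT; apply: contraNneq bu => <-.
rewrite big_seq_cond [RHS]big_seq_cond; apply: eq_bigr => u /andP [+ _].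
rewrite mem_words => /andP [_ hu].
have bu : b \notin u by apply/negP => /(allP hu); rewrite ltnn.
by rewrite bu mul1n.
Qed.

Lemma avoids_const b t : all (pred1 b) t -> avoids t.
Proof.
elim: t => [_|x t IH /andP [/eqP -> ht]]; first exact: avoids_nil.
rewrite avoids_cons IH // andbT.
by apply/andP; split; apply/negP => /has2_has /andP [/hasP [y yt] + /hasP [z zt]];
  rewrite (eqP (allP ht y yt)) (eqP (allP ht z zt)) ltnn.
Qed.

Lemma sum_words_all_pred1 L b : \sum_(t <- words L b.+1) all (pred1 b) t = 1.
Proof.
rewrite -count_sumE (@eq_in_count _ _ (pred1 (nseq L b))); last first.
  move=> t; rewrite mem_words => /andP [/eqP ht _] /=.
  by apply/all_pred1P/eqP; rewrite ht.
by rewrite count_uniq_mem ?uniq_words // mem_words size_nseq eqxx all_nseq ltnSn orbT.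
Qed.

Lemma avoids_cons_notin b v : b \notin v -> avoids (b :: v) = avoids v.
Proof.
move=> bv; rewrite avoids_cons.
by rewrite !(contraNF (fun h => has2_has h)) // has_pred1 (negbTE bv) ?andbF.
Qed.

Lemma avoids_top_cat_top b u t : all (fun x => x < b.+1) u -> all (fun x => x < b.+1) t ->
  b \notin u -> avoids (b :: u ++ b :: t) = avoids u && all (pred1 b) t.
Proof.
move=> hu ht bu.
have hu' : all (fun x => x < b) u.
  apply/allP=> x xu; rewrite ltn_neqAle -ltnS (allP hu x xu) andbT.
  by apply: contraNneq bu => <-.
have no_gt : has2 (fun z => b < z) (pred1 b) (u ++ b :: t) = false.
  apply/negbTE/negP => /has2_has /andP [/hasP [z]].
  by rewrite mem_cat in_cons => /or3P [/(allP hu)|/eqP ->|/(allP ht)] /=; lia.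
have no_b p : has2 (pred1 b) p u = false.
  by apply/negbTE/negP => /has2_has /andP [+ _]; rewrite has_pred1 (negbTE bu).
have lt_b : has (fun z => z < b) t || has2 (pred1 b) (fun z => z < b) t = ~~ all (pred1 b) t.
  have -> : has (fun z => z < b) t = ~~ all (pred1 b) t.
    rewrite -has_predC; apply: eq_in_has => z /(allP ht).
    by rewrite ltnS /= ltn_neqAle => ->; rewrite andbT.
  case: (boolP (all (pred1 b) t)) => //= hall.
  by apply/negbTE/negP => /has2_has /andP [_ /hasP [z /(allP hall) /eqP ->]]; rewrite ltnn.
rewrite avoids_cons no_gt has2_cat no_b has_pred1 (negbTE bu) /= eqxx /= lt_b negbK.
rewrite avoids_cat avoids_across_top //.
case hall: (all (pred1 b) t); last by rewrite !andbF.
have -> : all (fun v => ~~ forbidden u v) t.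
  by apply/allP => v vt; rewrite (eqP (allP hall v vt)) forbidden_ltF.
have bt : avoids (b :: t) by apply: (@avoids_const b); rewrite /= eqxx.
by rewrite bt andbT.
Qed.

Lemma sum_avoids_top_mem L b :
  \sum_(v <- words L b.+1) (b \in v) * avoids (b :: v) =
  \sum_(0 <= l < L) count avoids (words l b).
Proof.
rewrite big_words_first //; apply: eq_bigr => l _.
rewrite count_sumE -[RHS]big_words_notin.
apply: eq_big_seq => u; rewrite mem_words => /andP [_ hu].
rewrite (eq_big_seq (fun t => (b \notin u) * avoids u * all (pred1 b) t)); last first.
  move=> t; rewrite mem_words => /andP [_ ht].
  by case: (boolP (b \in u)) => bu //=; rewrite avoids_top_cat_top // !mul1n mulnb.
by rewrite -big_distrr /= sum_words_all_pred1 muln1.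
Qed.

Lemma maxval_leP s k : reflect (all (fun x => x <= k) s) (maxval s <= k).
Proof.
apply: (iffP (bigmax_leqP_seq _ _ _ _)) => [h|/allP h x xs _]; last exact: h.
by apply/allP => x xs; apply: h.
Qed.

Lemma maxval_cat_top a m t : all (fun x => x <= m) t ->
  maxval (a ++ m :: t) = maxn (maxval a) m.
Proof.
move/maxval_leP=> ht.
by rewrite /maxval big_cat big_cons /= -/(maxval t) (maxn_idPl ht).
Qed.

Lemma forbidden_catl a t y : forbidden a y -> forbidden (a ++ t) y.
Proof.
case/orP => [ya|/hasP [z za /andP [yz cz]]]; apply/orP; first by left; rewrite mem_cat ya.
right; apply/hasP; exists z; first by rewrite mem_cat za.
by rewrite yz /= count_cat (leq_trans cz) // leq_addr.
Qed.

Lemma forbidden_repeated a m t y : m \in t -> y < m -> forbidden (a ++ m :: t) y.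
Proof.
move=> mt ym; apply/orP; right; apply/hasP; exists m; first by rewrite mem_cat mem_head orbT.
have hct : 0 < count_mem m t by rewrite -has_count has_pred1.
by rewrite ym /= count_cat /= eqxx addnCA add1n ltnS (leq_trans hct) // leq_addl.
Qed.

Lemma forbidden_cat_top a m t y :
  all (fun x => x < m) a -> all (fun v => ~~ forbidden a v) t -> m \notin t ->
  ~~ forbidden a y -> y != m -> forbidden (a ++ m :: t) y = forbidden t y.
Proof.
move=> am ta mt Fy ym.
have ma : m \notin a by apply/negP => /(allP am); rewrite ltnn.
have ya : y \notin a by apply: contra Fy => ya; rewrite /forbidden ya.
rewrite /forbidden mem_cat in_cons (negbTE ya) (negbTE ym) /=; congr (_ || _).
apply/hasP/hasP.
- case=> z; rewrite mem_cat in_cons => hz /andP [yz]; rewrite count_cat /=.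
  case: (eqVneq m z) => [<-|nz].
    by rewrite (count_memPn ma) (count_memPn mt).
  rewrite add0n => cz.
  case: (leqP 2 (count_mem z a)) => c2.
    case/norP: Fy => _ /hasP []; exists z; rewrite ?yz //.
    by rewrite -has_pred1 has_count (leq_trans _ c2).
  have zt : z \in t.
    have ct : 0 < count_mem z t.
      by rewrite -(ltn_add2l (count_mem z a)) addn0; exact: leq_trans c2 cz.
    by rewrite -has_pred1 has_count.
  case: (posnP (count_mem z a)) => c0.
    by exists z; rewrite ?yz //; move: cz; rewrite c0 add0n.
  have za : z \in a by rewrite -has_pred1 has_count.
  by move: (allP ta z zt); rewrite /forbidden za.
- case=> z zt /andP [yz cz]; exists z; first by rewrite mem_cat in_cons zt !orbT.
  by rewrite yz count_cat /= (leq_trans cz) // addnA leq_addl.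
Qed.

Lemma count_filter_split (p q : pred nat) s :
  count p s = count p (filter q s) + count p (filter (predC q) s).
Proof.
by elim: s => [|x s IH] //=; rewrite IH; case: (q x) => /=; [rewrite addnA | rewrite addnCA].
Qed.

Lemma forb_cat_top a m t : all (fun x => x < m) a -> avoids a -> avoids (m :: t) ->
  all (fun v => ~~ forbidden a v) t -> all (fun x => x < m.+1) t ->
  forb (a ++ m :: t) = if m \in t then m.+1 else
    count (forbidden a) (iota 0 m) +
    count (forbidden t) (filter (predC (forbidden a)) (iota 0 m)) + 1.
Proof.
move=> am ha hmt hFt tm.
have hs : avoids (a ++ m :: t) by rewrite avoids_cat avoids_across_top // ha hmt hFt.
have max_a : maxval a <= m by apply/maxval_leP/allP => x /(allP am) /ltnW.
rewrite forbE // maxval_cat_top ?(maxn_idPr max_a) //.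
have top : forbidden (a ++ m :: t) m by rewrite /forbidden mem_cat mem_head orbT.
rewrite -addn1 iotaD count_cat /= top addn0.
case: ifP => mt.
  rewrite (@eq_in_count _ _ predT) ?count_predT ?size_iota ?addn1 // => y.
  by rewrite mem_iota /= => hy; apply: forbidden_repeated.
congr (_ + 1); rewrite (count_filter_split _ (forbidden a)); congr (_ + _).
- rewrite count_filter; apply: eq_count => y /=.
  by case hy: (forbidden a y); rewrite ?andbF ?andbT //; apply: forbidden_catl.
- apply: eq_in_count => y; rewrite mem_filter mem_iota add0n => /andP [hy /andP [_ ym]].
  by rewrite /= forbidden_cat_top ?mt // ltn_eqF.
Qed.

Lemma jcountE L b c : jcount L b c = count (fun s => avoids s && (forb s == c)) (words L b).
Proof. exact: card_tuple_words. Qed.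

Lemma kcountE L b : kcount L b = count avoids (words L b).
Proof. exact: card_tuple_words. Qed.

Definition suffix_weight (L m f i : nat) : nat :=
  jcount L (m - i) (f - i - 1) + kdelta f m.+1 * \sum_(0 <= l < L) kcount l (m - i).

Lemma sum_avoids_forb_shift L c i f :
  \sum_(v <- words L c) (avoids v && (i + forb v + 1 == f)) = (i < f) * jcount L c (f - i - 1).
Proof.
rewrite jcountE count_sumE; case: (ltnP i f) => hif.
  by rewrite mul1n; apply: eq_bigr => v _; congr (nat_of_bool (_ && _)); apply/eqP/eqP; lia.
by rewrite mul0n big1 // => v _; case: eqP => [|_]; rewrite ?andbF //; lia.
Qed.

Definition allowed (a : seq nat) (m : nat) : seq nat :=
  filter (predC (forbidden a)) (iota 0 m.+1).

Section SuffixAfterMax.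

Variables (a : seq nat) (m : nat).
Hypotheses (a_avoids : avoids a) (a_max : maxval a < m).

Let a_lt_m : all (fun x => x < m) a.
Proof. by apply/allP => x /leq_maxval /leq_ltn_trans; apply. Qed.

Lemma forb_prefix : forb a = count (forbidden a) (iota 0 m).
Proof.
rewrite forbE // (@count_iota_supp _ (maxval a).+1 m) // => y.
by rewrite ltnS; exact: forbidden_le_maxval.
Qed.

Lemma allowed_rcons : allowed a m = rcons (filter (predC (forbidden a)) (iota 0 m)) m.
Proof. by rewrite /allowed -addn1 iotaD filter_cat /= forbidden_ltF // cats1. Qed.

Lemma size_allowed_below : size (filter (predC (forbidden a)) (iota 0 m)) = m - forb a.
Proof.
rewrite size_filter forb_prefix.
by rewrite -[m in m - _](size_iota 0 m) -(count_predC (forbidden a)) addKn.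
Qed.

Lemma size_allowed : size (allowed a m) = (m - forb a).+1.
Proof. by rewrite allowed_rcons size_rcons size_allowed_below. Qed.

Let rl := nth 0 (allowed a m).
Let b := m - forb a.
Let D := [pred k | k < b.+1].

Lemma allowed_mono : {in D &, {mono rl : x y / x < y}}.
Proof.
rewrite /D -size_allowed.
apply/leqW_mono_in/leq_mono_in/sorted_ltn_nth; first exact: ltn_trans.
by apply: sorted_filter; [exact: ltn_trans | exact: iota_ltn_sorted].
Qed.

Lemma allowed_top : rl b = m.
Proof. by rewrite /rl allowed_rcons nth_rcons size_allowed_below ltnn eqxx. Qed.

Lemma allowed_below : map rl (iota 0 b) = filter (predC (forbidden a)) (iota 0 m).
Proof.
rewrite -[RHS](mkseq_nth 0) size_allowed_below; apply/eq_in_map => k.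
by rewrite mem_iota add0n /rl allowed_rcons nth_rcons size_allowed_below => /= ->.
Qed.

Lemma forb_relabel v : all (fun x => x < b.+1) v -> avoids (b :: v) ->
  forb (a ++ m :: map rl v) = if b \in v then m.+1 else forb a + forb v + 1.
Proof.
move=> hv hav.
have vD : all (fun x => x \in D) (b :: v) by rewrite /= inE ltnSn.
have rl_allowed x : x \in D -> rl x \in allowed a m.
  by move=> xD; apply: mem_nth; rewrite size_allowed.
have allowed_v : all (fun x => x \in allowed a m) (map rl v).
  by apply/allP => _ /mapP [x /(allP hv) xv ->]; apply: rl_allowed.
rewrite forb_cat_top //; last 3 first.
- by rewrite -allowed_top -map_cons (avoids_relabel allowed_mono).
- by apply/allP => x /(allP allowed_v); rewrite mem_filter => /andP [].
- by apply/allP => x /(allP allowed_v); rewrite mem_filter mem_iota => /andP [_ /andP [_]].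
have -> : (m \in map rl v) = (b \in v).
  rewrite -allowed_top; apply/mapP/idP => [[k kv]|bv]; last by exists b.
  by move/eqP; rewrite (relabel_eq allowed_mono) ?inE ?ltnSn ?(allP hv k kv) // => /eqP ->.
case: ifP => // bv.
rewrite -forb_prefix -allowed_below count_map; congr (_ + _ + 1).
have avv : avoids v by move: hav; rewrite avoids_cons => /and3P [].
have vD' : all (fun x => x \in D) v by move: vD => /andP [].
rewrite (@eq_in_count _ _ (forbidden v)); last first.
  move=> k; rewrite mem_iota add0n => /= hk.
  by rewrite (forbidden_relabel allowed_mono) // inE ltnW.
have v_below_b y : forbidden v y -> y < b.
  case/orP => [yv|/hasP [z zv /andP [yz _]]]; last by apply: leq_trans yz _; exact: (allP hv).
  rewrite ltn_neqAle -ltnS (allP hv y yv) andbT.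
  by apply: contraFneq bv => <-.
rewrite forbE // -(@count_iota_supp _ b (b + (maxval v).+1)) ?leq_addr //.
rewrite -(@count_iota_supp _ (maxval v).+1 (b + (maxval v).+1)) ?leq_addl // => y.
by rewrite ltnS; exact: forbidden_le_maxval.
Qed.

Lemma sum_avoids_cat_top L f :
  \sum_(t <- words L m.+1) (avoids (a ++ m :: t) && (forb (a ++ m :: t) == f))
  = (forb a < f) * suffix_weight L m f (forb a).
Proof.
rewrite (eq_big_seq (fun t => all (fun x => x \in allowed a m) t *
                              (avoids (m :: t) && (forb (a ++ m :: t) == f)))); last first.
  move=> t; rewrite mem_words => /andP [_ ht].
  have -> : all (fun x => x \in allowed a m) t = all (fun v => ~~ forbidden a v) t.
    by apply: eq_in_all => x /(allP ht) xm; rewrite mem_filter mem_iota add0n xm andbT /= andbT.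
  rewrite avoids_cat avoids_across_top // a_avoids.
  by case: (all _ t); rewrite ?andbF ?mul0n ?mul1n ?andbT.
rewrite big_words_relabel ?filter_uniq ?iota_uniq //; last first.
  by apply/allP => x; rewrite mem_filter mem_iota => /andP [_ /andP [_]].
rewrite size_allowed.
rewrite (eq_big_seq (fun v : seq nat =>
           (b \notin v) * (avoids v && (forb a + forb v + 1 == f)) +
           (b \in v) * avoids (b :: v) * (m.+1 == f))); last first.
  move=> v; rewrite mem_words => /andP [_ hv].
  have vD : all (fun x => x \in D) (b :: v) by rewrite /= inE ltnSn.
  rewrite -[X in X :: _]allowed_top -map_cons (avoids_relabel allowed_mono) //.
  case: (boolP (avoids (b :: v))) => hav; last first.
    case: (boolP (b \in v)) => bv //.
    by rewrite -(avoids_cons_notin bv) (negbTE hav) muln0.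
  rewrite map_cons allowed_top forb_relabel //.
  case: (boolP (b \in v)) => bv /=; first by rewrite !mul1n.
  by rewrite -(avoids_cons_notin bv) hav mul1n addn0.
rewrite big_split /= -big_distrl /= big_words_notin sum_avoids_forb_shift sum_avoids_top_mem.
rewrite /suffix_weight /kdelta mulnDr eq_sym; congr (_ + _).
rewrite (eq_bigr _ (fun l _ => kcountE l (m - forb a))).
have forb_le_m : forb a <= m.
  by rewrite forb_prefix; apply: leq_trans (count_size _ _) _; rewrite size_iota.
by case: eqP => [->|_]; rewrite ?muln0 // ltnS forb_le_m mul1n mulnC.
Qed.

End SuffixAfterMax.

Definition is_lseq (m f : nat) (s : seq nat) : bool :=
  [&& inversion_seq s, avoids s, maxval s == m & forb s == f].

Lemma lcountE n m f : lcount n m f = count (is_lseq m f) (words n n).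
Proof. exact: card_tuple_words. Qed.

Lemma is_lseq_mem m f s : 0 < m -> is_lseq m f s -> m \in s.
Proof.
move=> m_gt0 /and4P [_ _ /eqP mx _]; rewrite -mx maxval_mem //.
by apply: contraTneq m_gt0 => s0; rewrite -mx s0 /maxval big_nil.
Qed.

Lemma is_lseq_cat_top m f a t : is_lseq m f (a ++ m :: t) ->
  [/\ m <= size a, inversion_seq a & all (fun x => x < m.+1) t].
Proof.
case/and4P => inv _ /eqP mx _.
have m_le : m <= size a.
  have := inversion_seqP _ inv (size a).
  by rewrite nth_cat ltnn subnn size_cat /= addnS ltnS leq_addr; apply.
have t_le : all (fun x => x < m.+1) t.
  by apply/allP => x xt; rewrite ltnS -mx leq_maxval // mem_cat in_cons xt !orbT.
by split=> //; rewrite -(inversion_seq_cat m_le t_le).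
Qed.

Lemma sum_is_lseq_cat_top a m f L : 0 < m -> m <= size a ->
  \sum_(t <- words L m.+1) (m \notin a) * is_lseq m f (a ++ m :: t)
  = [&& inversion_seq a, avoids a & maxval a < m] *
    ((forb a < f) * suffix_weight L m f (forb a)).
Proof.
move=> m_gt0 m_le.
case: (boolP (m \in a)) => ma.
  have -> : (maxval a < m) = false by rewrite ltnNge leq_maxval.
  by rewrite big1 // !andbF.
have a_nil : a != [::] by case: a m_le ma => //; rewrite leqNgt m_gt0.
have max_lt : (maxval a <= m) = (maxval a < m).
  by rewrite leq_eqVlt; case: eqP => // mx; move: (maxval_mem a_nil); rewrite mx (negbTE ma).
rewrite (eq_big_seq (fun t => (inversion_seq a && (maxval a < m)) *
                              (avoids (a ++ m :: t) && (forb (a ++ m :: t) == f)))); last first.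
  move=> t; rewrite mem_words => /andP [_ ht].
  rewrite mul1n /is_lseq inversion_seq_cat //.
  have -> : (maxval (a ++ m :: t) == m) = (maxval a < m).
    rewrite maxval_cat_top //; case: (leqP (maxval a) m) => h.
      by rewrite eqxx -max_lt h.
    by rewrite gtn_eqF // ltnNge (ltnW h).
  by case: inversion_seq; case: (maxval a < m); case: avoids; case: (forb _ == f).
rewrite -big_distrr /=.
case: (boolP (inversion_seq a && (maxval a < m))) => [/andP [-> max_a] | inv_max]; last first.
  by rewrite mul0n; move: inv_max; case: inversion_seq; case: (maxval a < m); rewrite ?andbF.
case: (boolP (avoids a)) => av_a.
  by rewrite (sum_avoids_cat_top av_a max_a) max_a !mul1n.
by rewrite big1 //= => t _; rewrite avoids_cat (negbTE av_a).
Qed.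

Lemma lcount_first_max n m f : 0 < m ->
  lcount n m f = \sum_(m.+1 <= p < n.+1) \sum_(a <- words p.-1 p.-1)
                   \sum_(t <- words (n - p) m.+1) (m \notin a) * is_lseq m f (a ++ m :: t).
Proof.
move=> m_gt0; rewrite lcountE count_sumE.
rewrite (eq_bigr (fun s => (m \in s) * is_lseq m f s)); last first.
  by move=> s _; case: (boolP (is_lseq m f s)) => [/(is_lseq_mem m_gt0) ->|]; rewrite ?muln0.
case: (ltnP m n) => [mn | nm]; last first.
  rewrite big_geq ?ltnS // big1_seq // => s /andP [_]; rewrite mem_words => /andP [_ sn].
  by case: (boolP (m \in s)) => // /(allP sn); rewrite ltnNge nm.
rewrite big_words_first // (big_cat_nat (leq0n m) (ltnW mn)) /= big1_seq ?add0n; last first.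
  move=> k /andP [_]; rewrite mem_index_iota => /andP [_ km].
  rewrite big1_seq // => a /andP [_]; rewrite mem_words => /andP [/eqP ak _].
  rewrite big1 // => t _; case: (boolP (is_lseq _ _ _)) => [|_]; last by rewrite muln0.
  by case/is_lseq_cat_top; rewrite ak leqNgt km.
rewrite big_add1 /=; apply: eq_big_nat => k /andP [mk kn].
rewrite (@big_words_shrink k n k) ?(ltnW kn) //; last first.
  move=> a ak _; rewrite lt0n sum_nat_seq_neq0 => /hasP [t _ /=].
  case: (boolP (is_lseq _ _ _)) => [/is_lseq_cat_top [_ inv _] _ | _]; last by rewrite muln0.
  by rewrite -ak; apply: inversion_seq_bound.
apply: eq_big_seq => a _; apply: big_words_shrink => // t _ _.
by case: (boolP (is_lseq _ _ _)) => [/is_lseq_cat_top [_ _ //]|]; rewrite muln0.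
Qed.

Lemma sum_is_lseq_weight a m f (w : nat -> nat) :
  \sum_(0 <= i < f) \sum_(0 <= j < m) is_lseq j i a * w i =
  [&& inversion_seq a, avoids a & maxval a < m] * ((forb a < f) * w (forb a)).
Proof.
rewrite (eq_bigr (fun i => (forb a == i) * ([&& inversion_seq a, avoids a & maxval a < m] * w i))).
  by rewrite big_nat_pred1 mulnCA.
move=> i _.
rewrite (eq_bigr (fun j => (maxval a == j) * ([&& inversion_seq a, avoids a & forb a == i] * w i))).
  rewrite big_nat_pred1 /=.
  by case: inversion_seq; case: avoids; case: (maxval a < m); case: eqP;
    rewrite ?mul0n ?mul1n ?muln0.
move=> j _; rewrite /is_lseq.
by case: inversion_seq; case: avoids; case: eqP; case: eqP; rewrite ?mul0n ?mul1n ?muln0.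
Qed.

Lemma sum_lcount_weight k m f (w : nat -> nat) :
  \sum_(0 <= i < f) \sum_(0 <= j < m) lcount k j i * w i =
  \sum_(a <- words k k)
    [&& inversion_seq a, avoids a & maxval a < m] * ((forb a < f) * w (forb a)).
Proof.
rewrite (eq_bigr (fun i => \sum_(a <- words k k) \sum_(0 <= j < m) is_lseq j i a * w i)).
  by rewrite exchange_big; apply: eq_bigr => a _; exact: sum_is_lseq_weight.
move=> i _; rewrite exchange_big; apply: eq_bigr => j _.
by rewrite lcountE count_sumE big_distrl.
Qed.

Theorem mainTheorem13 (n m f : nat) :
  1 <= n -> 1 <= m ->
  lcount n m f =
  \sum_(m.+1 <= p < n.+1) \sum_(0 <= i < f) \sum_(0 <= j < m)
     lcount (p - 1) j i *
     (jcount (n - p) (m - i) (f - i - 1)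
      + kdelta f m.+1 * \sum_(0 <= l < n - p) kcount l (m - i)).
Proof.
move=> _ m_gt0; rewrite lcount_first_max //.
apply: eq_big_nat => p /andP [mp _].
rewrite subn1 (sum_lcount_weight _ _ _ (suffix_weight (n - p) m f)).
apply: eq_big_seq => a; rewrite mem_words => /andP [/eqP size_a _].
by rewrite sum_is_lseq_cat_top // size_a; lia.
Qed.
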